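(* Let $k\geq 1$ and let $x_1,\ldots,x_k$ be an arrangement of $1,\ldots,k$. Let $p$ be the POP of length $k$ defined by the relations $x_1>x_j$ for all $2\leq j\leq k$ (and no other relations), and let $a(n)=|S_n(p)|$. Then $a(n)=n!$ for $n<k$ and $a(n)=(k-1)!\,(k-1)^{n-k+1}$ for $n\geq k$. Equivalently, $$\sum_{n\geq 0}a(n)x^n=\frac{(k-1)(k-1)!\,x^k}{1-(k-1)x}+\sum_{i=0}^{k-1}i!\,x^i.$$
   Context: An $n$-permutation is a word $\pi=\pi_1\cdots\pi_n$ containing each of $1,\ldots,n$ exactly once; $S_n$ is the set of $n$-permutations ($S_0$ consists of the empty permutation). A partially ordered pattern (POP) $p$ of length $k$ is a partial order on the label set $\{1,\ldots,k\}$; it is described by a set of generating relations, where a relation $x>y$ means that in an occurrence the entry in the $x$-th chosen position must be larger than the entry in the $y$-th chosen position, and labels not involved in any relation are unconstrained. An $n$-permutation $\pi$ contains $p$ if there are indices $1\leq i_1<\cdots<i_k\leq n$ such that $\pi_{i_x}>\pi_{i_y}$ whenever $x>y$ in the partial order; otherwise $\pi$ avoids $p$. $S_n(p)$ denotes the set of $n$-permutations avoiding $p$. *)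

From mathcomp Require Import all_boot all_order all_fingroup.
Set Implicit Arguments. Unset Strict Implicit. Unset Printing Implicit Defensive.

(* An n-permutation is an element of 'S_n; entries are 0..n-1 (order-isomorphic
   to 1..n).  A POP of length k is given by its set of generating relations
   p : rel 'I_k, where p a b means "label a > label b" (labels 0..k-1). *)

Definition pop (k : nat) := rel 'I_k.

Definition pop_contains (n k : nat) (pi : 'S_n) (p : pop k) : bool :=
  [exists f : {ffun 'I_k -> 'I_n},
    [forall a : 'I_k, forall b : 'I_k, (a < b) ==> (f a < f b)] &&
    [forall a : 'I_k, forall b : 'I_k, p a b ==> (pi (f b) < pi (f a))]].

Definition pop_avoids (n k : nat) (pi : 'S_n) (p : pop k) : bool :=
  ~~ pop_contains pi p.

(* The POP whose generating relations are x_1 > x_j for all 2 <= j <= k,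
   where x is an arrangement of the labels (x_1 is x applied to the first index). *)
Definition max_first_pop (k : nat) (x : 'S_k) (x1 : 'I_k) : pop k :=
  fun a b => (a == x x1) && [exists j : 'I_k, (j != x1) && (b == x j)].

From mathcomp Require Import all_boot all_order all_fingroup.
From mathcomp Require Import zify.
Set Implicit Arguments. Unset Strict Implicit. Unset Printing Implicit Defensive.

(* Let M be the label x_1 and K = k-1-M.  The POP p only asks that the entry in
   the M-th chosen position exceed all other chosen entries, so pi contains p
   exactly when some position i of pi has at least M smaller entries to its left
   and at least K smaller entries to its right (the "peak" characterization,
   [contains_peak_pop]).  Call a position harmless when this fails; pi avoids p
   iff all its positions are harmless.

   Counting: every permutation of {0..n} arises uniquely by inserting the
   maximum n into a permutation of {0..n-1} at some gap c; the new entry has c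
   smaller entries to its left and n-c to its right, and the insertion does not
   change the counts of the other entries.  Hence the number of admissible gaps
   (n+1 if n < M+K, else M+K) multiplies the count, which gives n! for
   n <= k-1 and (k-1)!(k-1)^(n-k+1) beyond. *)

Section HarmlessWords.

Variables m K : nat.

(* An entry with L smaller entries on its left and R on its right cannot play
   the role of the maximal label of an occurrence. *)
Definition harmless (L R : nat) : bool := (L < m) || (R < K).

Fixpoint harmless_after (pre w : seq nat) : bool :=
  if w is v :: t then
    harmless (count (fun u => u < v) pre) (count (fun u => u < v) t)
    && harmless_after (v :: pre) t
  else true.

Definition harmless_word (w : seq nat) : bool := harmless_after [::] w.

(* The left context enters only through counts, hence up to permutation. *)
Lemma harmless_after_perm w pre pre' :
  perm_eq pre pre' -> harmless_after pre w = harmless_after pre' w.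
Proof.
elim: w pre pre' => //= v t IH pre pre' Hpre.
rewrite (IH (v :: pre) (v :: pre')) ?perm_cons //.
by move/seq.permP: Hpre => ->.
Qed.

Lemma harmless_after_big n t pre : all (fun u => u < n) t ->
  harmless_after (n :: pre) t = harmless_after pre t.
Proof.
elim: t pre => //= v t IH pre /andP[vn tn].
rewrite ltnNge ltnW //= add0n; congr (_ && _).
rewrite -(IH (v :: pre)) //; apply: harmless_after_perm.
by rewrite (perm_catCA [:: v] [:: n] pre).
Qed.

Lemma harmless_after_insert n u t pre :
  all (fun u => u < n) (pre ++ u ++ t) ->
  harmless_after pre (u ++ n :: t) =
  harmless_after pre (u ++ t) && harmless (size pre + size u) (size t).
Proof.
elim: u pre => [|v u IH] pre; rewrite !all_cat => /and3P[Hpre Hu Ht].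
  rewrite /= addn0 harmless_after_big // andbC.
  by move: Hpre Ht; rewrite !all_count => /eqP -> /eqP ->.
rewrite /= in Hu; case/andP: Hu => vn Hu.
rewrite [LHS]/= IH; last by rewrite !all_cat /= vn Hpre Hu Ht.
have nv : (n < v) = false by rewrite ltnNge ltnW.
by rewrite !count_cat /= nv add0n count_cat andbA addSnnS.
Qed.

Lemma harmless_afterE pre w : harmless_after pre w =
  all (fun i => harmless (count (fun u => u < nth 0 w i) (pre ++ take i w))
                         (count (fun u => u < nth 0 w i) (drop i.+1 w)))
      (iota 0 (size w)).
Proof.
elim: w pre => [|v t IH] pre //=.
rewrite IH drop0 cats0; congr (_ && _).
rewrite -[1]/(1 + 0) iotaDl all_map; apply: eq_all => i /=.
by rewrite !count_cat /= addnCA.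
Qed.

End HarmlessWords.

Definition insert_at (n : nat) (w : seq nat) (c : nat) : seq nat :=
  take c w ++ n :: drop c w.

Definition perm_words_step (n : nat) (s : seq (seq nat)) : seq (seq nat) :=
  [seq insert_at n w c | w <- s, c <- iota 0 n.+1].

Fixpoint perm_words (n : nat) : seq (seq nat) :=
  if n is n'.+1 then perm_words_step n' (perm_words n') else [:: [::]].

Lemma perm_iotaS n : perm_eq (iota 0 n.+1) (n :: iota 0 n).
Proof. by rewrite -addn1 iotaD add0n perm_catC. Qed.

Lemma perm_insert_at n w c : perm_eq (insert_at n w c) (n :: w).
Proof.
rewrite /insert_at -[X in perm_eq _ (_ :: X)](cat_take_drop c w).
by rewrite (perm_catCA (take c w) [:: n]).
Qed.

Lemma insert_at_rem n w : n \in w -> insert_at n (rem n w) (index n w) = w.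
Proof.
move=> nw; have iw : index n w < size w by rewrite index_mem.
rewrite /insert_at remE; set i := index n w.
rewrite take_size_cat ?drop_size_cat ?size_takel 1?ltnW //.
by rewrite -[RHS](cat_take_drop i w) (drop_nth n iw) nth_index.
Qed.

Lemma insert_at_inj n w1 w2 c1 c2 : n \notin w1 -> n \notin w2 ->
  c1 <= size w1 -> c2 <= size w2 ->
  insert_at n w1 c1 = insert_at n w2 c2 -> w1 = w2 /\ c1 = c2.
Proof.
move=> n1 n2 s1 s2 E.
have t1 : size (take c1 w1) = c1 by rewrite size_takel.
have t2 : size (take c2 w2) = c2 by rewrite size_takel.
have Ec : c1 = c2.
  have := congr1 (index n) E; rewrite !index_cat /= eqxx !addn0 t1 t2.
  by rewrite !ifN // (contra (@mem_take _ _ _ _)).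
subst c2; split=> //.
move/eqP: E; rewrite /insert_at eqseq_cat ?t1 ?t2 // => /andP[/eqP Et /eqP [Ed]].
by rewrite -(cat_take_drop c1 w1) -(cat_take_drop c1 w2) Et Ed.
Qed.

Lemma mem_perm_words n w : (w \in perm_words n) = perm_eq w (iota 0 n).
Proof.
elim: n w => [|n IH] w.
  by rewrite inE; apply/eqP/idP => [->|/perm_size] //; case: w.
apply/allpairsP/idP => [[[w' c] /= [Hw _ ->]]|Hw].
  rewrite IH in Hw; apply: perm_trans (perm_insert_at _ _ _) _.
  by rewrite perm_sym (perm_trans (perm_iotaS n)) // perm_cons perm_sym.
have nw : n \in w by rewrite (perm_mem Hw) mem_iota add0n ltnSn.
exists (rem n w, index n w); split; last by rewrite insert_at_rem.
- rewrite IH -(perm_cons n); apply: (@perm_trans _ (iota 0 n.+1)) (perm_iotaS n).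
  by apply: perm_trans Hw; rewrite perm_sym perm_to_rem.
- by rewrite mem_iota add0n -(size_iota 0 n.+1) -(perm_size Hw) index_mem.
Qed.

Lemma perm_words_uniq n : uniq (perm_words n).
Proof.
elim: n => // n IH; apply: allpairs_uniq => //; first exact: iota_uniq.
move=> [w1 c1] [w2 c2] M1 M2 /= E.
case/allpairsP: M1 => [[? ?] [H1 Hc1 [E1 E2]]].
case/allpairsP: M2 => [[? ?] [H2 Hc2 [E3 E4]]].
subst.
rewrite !mem_perm_words in H1 H2; rewrite !mem_iota /= in Hc1 Hc2.
have [||||-> ->] // := insert_at_inj _ _ _ _ E.
- by rewrite (perm_mem H1) mem_iota ltnn andbF.
- by rewrite (perm_mem H2) mem_iota ltnn andbF.
- by rewrite (perm_size H1) size_iota -ltnS.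
- by rewrite (perm_size H2) size_iota -ltnS.
Qed.

Lemma perm_words_bounded n w : w \in perm_words n ->
  size w = n /\ all (fun u => u < n) w.
Proof.
rewrite mem_perm_words => Hw; split; first by rewrite (perm_size Hw) size_iota.
by apply/allP => u; rewrite (perm_mem Hw) mem_iota.
Qed.

Section Counting.

Variables m K : nat.

Lemma count_harmless_positions n :
  count (fun c => harmless m K c (n - c)) (iota 0 n.+1) =
  if n < m + K then n.+1 else m + K.
Proof.
case: ifP => Hn.
  rewrite -[in RHS](size_iota 0 n.+1); apply/eqP; rewrite -all_count.
  apply/allP => c; rewrite mem_iota /harmless => /andP[_ Hc].
  by apply/orP; case: (ltnP c m) => Hcm; [left | right; lia].
have -> : n.+1 = m + (n.+1 - m - K) + K by lia.
rewrite !iotaD !count_cat add0n.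
rewrite (@eq_in_count _ _ predT (iota 0 m)); last first.
  by move=> c; rewrite mem_iota /harmless => /andP[_ ->].
rewrite (@eq_in_count _ _ pred0 (iota m _)); last first.
  by move=> c; rewrite mem_iota /harmless => /andP[H1 H2]; apply/negbTE; lia.
rewrite (@eq_in_count _ _ predT (iota (m + _) K)); last first.
  by move=> c; rewrite mem_iota /harmless => /andP[H1 H2]; apply/orP; right; lia.
by rewrite !count_predT count_pred0 !size_iota addn0.
Qed.

Lemma harmless_insert_max n w c : w \in perm_words n -> c <= n ->
  harmless_word m K (insert_at n w c) = harmless_word m K w && harmless m K c (n - c).
Proof.
case/perm_words_bounded => Hs Hl Hc.
rewrite /harmless_word /insert_at harmless_after_insert ?cat_take_drop //.
by rewrite size_takel ?Hs // size_drop Hs.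
Qed.

Lemma count_perm_words_step n s : {subset s <= perm_words n} ->
  count (harmless_word m K) (perm_words_step n s) =
  count (fun c => harmless m K c (n - c)) (iota 0 n.+1) * count (harmless_word m K) s.
Proof.
elim: s => [|w s IH] Hs; first by rewrite muln0.
have Hw : w \in perm_words n by apply: Hs; rewrite mem_head.
rewrite /perm_words_step allpairs_cons count_cat -/(perm_words_step n s).
rewrite IH => [|u Hu]; last by apply: Hs; rewrite inE Hu orbT.
rewrite mulnDr count_map; congr (_ + _).
rewrite (@eq_in_count _ _ (fun c => harmless_word m K w && harmless m K c (n - c))).
  by case: (harmless_word m K w); rewrite /= ?muln1 ?muln0 ?count_pred0.
by move=> c; rewrite mem_iota => /andP[_ Hc]; rewrite /= harmless_insert_max.
Qed.

Lemma count_harmless_perm_words n :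
  count (harmless_word m K) (perm_words n) =
  if n <= m + K then n`! else (m + K)`! * (m + K) ^ (n - (m + K)).
Proof.
elim: n => [|n IH] //=.
rewrite count_perm_words_step // count_harmless_positions IH.
case: (ltnP n (m + K)) => H1; first by rewrite ltnW // factS.
case: (ltnP (m + K) n) => H2.
  by rewrite subSn // expnS mulnCA.
have -> : n = m + K by apply/eqP; rewrite eqn_leq H1 H2.
by rewrite subSn // subnn expn1 mulnC.
Qed.

End Counting.

Definition word n (pi : 'S_n) : seq nat := [seq val (pi i) | i <- enum 'I_n].

Lemma nth_word n (pi : 'S_n) (i : 'I_n) : nth 0 (word pi) i = val (pi i).
Proof. by rewrite /word (nth_map i) ?size_enum_ord // nth_ord_enum. Qed.

Lemma size_word n (pi : 'S_n) : size (word pi) = n.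
Proof. by rewrite size_map size_enum_ord. Qed.

Lemma word_inj n : injective (@word n).
Proof. by move=> p1 p2 E; apply/permP => i; apply: val_inj; rewrite -!nth_word E. Qed.

Lemma word_in_perm_words n (pi : 'S_n) : word pi \in perm_words n.
Proof.
have -> : word pi = map val (map pi (enum 'I_n)) by rewrite -map_comp.
rewrite mem_perm_words -val_enum_ord; apply/perm_map/uniq_perm.
- by rewrite map_inj_uniq ?enum_uniq //; exact: perm_inj.
- exact: enum_uniq.
by move=> i; rewrite mem_enum; apply/mapP; exists (pi^-1 i)%g; rewrite ?mem_enum ?permKV.
Qed.

Lemma perm_words_word n w : w \in perm_words n -> exists pi : 'S_n, word pi = w.
Proof.
rewrite mem_perm_words => Hw.
have Hs : size w = n by rewrite (perm_size Hw) size_iota.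
have Hl (i : 'I_n) : nth 0 w i < n.
  have : nth 0 w i \in w by rewrite mem_nth ?Hs.
  by rewrite (perm_mem Hw) mem_iota.
have g_inj : injective (fun i => Ordinal (Hl i)).
  move=> i j /(congr1 val) /= /eqP; rewrite nth_uniq ?Hs ?(perm_uniq Hw) ?iota_uniq //.
  by move/eqP/val_inj.
exists (perm g_inj); apply: (@eq_from_nth _ 0); rewrite size_word ?Hs // => i Hi.
by rewrite -[i]/(val (Ordinal Hi)) nth_word permE.
Qed.

Lemma card_word n (P : pred (seq nat)) :
  #|[set pi : 'S_n | P (word pi)]| = count P (perm_words n).
Proof.
rewrite cardsE cardE /enum_mem size_filter -enumT -(count_map (@word n) P).
apply/seq.permP; apply: uniq_perm.
- by rewrite map_inj_uniq ?enum_uniq //; apply: word_inj.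
- exact: perm_words_uniq.
move=> w; apply/mapP/idP => [[pi _ ->]|/perm_words_word [pi <-]].
  exact: word_in_perm_words.
by exists pi; rewrite ?mem_enum.
Qed.

Definition smaller_left n (pi : 'S_n) (i : 'I_n) : {set 'I_n} :=
  [set j : 'I_n | (j < i) && (pi j < pi i)].

Definition smaller_right n (pi : 'S_n) (i : 'I_n) : {set 'I_n} :=
  [set j : 'I_n | (i < j) && (pi j < pi i)].

Lemma card_set_count (T : finType) (P : pred T) : #|[set x | P x]| = count P (enum T).
Proof. by rewrite cardsE cardE -size_filter enumT /enum_mem. Qed.

Lemma count_subseq_uniq (T : eqType) (s1 s2 : seq T) (P : pred T) :
  uniq s2 -> subseq s1 s2 -> count P s1 = count (fun x => (x \in s1) && P x) s2.
Proof.
move=> u2 /(subseq_uniqP u2) {1}->; rewrite count_filter.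
by apply: eq_count => x; rewrite /= andbC.
Qed.

Lemma count_take_enum_ord n t (P : pred 'I_n) :
  count P (take t (enum 'I_n)) = #|[set j : 'I_n | (j < t) && P j]|.
Proof.
rewrite card_set_count (count_subseq_uniq _ (enum_uniq _) (take_subseq _ _)).
apply: eq_count => j; congr (_ && _).
by rewrite -(mem_map val_inj) map_take val_enum_ord take_iota mem_iota ltn_min ltn_ord andbT.
Qed.

Lemma count_drop_enum_ord n t (P : pred 'I_n) :
  count P (drop t (enum 'I_n)) = #|[set j : 'I_n | (t <= j) && P j]|.
Proof.
rewrite card_set_count (count_subseq_uniq _ (enum_uniq _) (drop_subseq _ _)).
apply: eq_count => j; congr (_ && _).
rewrite -(mem_map val_inj) map_drop val_enum_ord drop_iota mem_iota add0n.
by case: (leqP t j) => //= tj; rewrite subnKC ?ltn_ord // (leq_trans tj) // ltnW.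
Qed.

Lemma harmless_word_perm m K n (pi : 'S_n) :
  harmless_word m K (word pi) =
  [forall i : 'I_n, harmless m K #|smaller_left pi i| #|smaller_right pi i|].
Proof.
rewrite /harmless_word harmless_afterE size_word.
have at_pos (i : 'I_n) :
    count (fun u => u < nth 0 (word pi) i) ([::] ++ take i (word pi)) = #|smaller_left pi i| /\
    count (fun u => u < nth 0 (word pi) i) (drop i.+1 (word pi)) = #|smaller_right pi i|.
  rewrite /word -map_take -map_drop !count_map nth_word.
  by rewrite count_take_enum_ord count_drop_enum_ord.
apply/allP/forallP => [H i|H i].
  have [<- <-] := at_pos i; by apply: H; rewrite mem_iota /=.
rewrite mem_iota /= => Hi; move: (H (Ordinal Hi)).
by have [<- <-] := at_pos (Ordinal Hi).
Qed.

Definition positions n (P : pred 'I_n) : seq 'I_n := [seq j <- enum 'I_n | P j].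

Lemma size_positions n (P : pred 'I_n) : size (positions P) = #|[set j | P j]|.
Proof. by rewrite size_filter card_set_count. Qed.

Lemma nth_positions n (P : pred 'I_n) j0 a :
  a < #|[set j | P j]| -> P (nth j0 (positions P) a).
Proof.
move=> Ha; have : nth j0 (positions P) a \in positions P by rewrite mem_nth ?size_positions.
by rewrite mem_filter => /andP[].
Qed.

Lemma nth_positions_lt n (P : pred 'I_n) j0 a b :
  a < b -> b < #|[set j | P j]| -> nth j0 (positions P) a < nth j0 (positions P) b.
Proof.
move=> ab Hb; have tr : transitive (relpre (@nat_of_ord n) ltn) by move=> ? ? ?; exact: ltn_trans.
have srt : sorted (relpre (@nat_of_ord n) ltn) (positions P).
  by apply: sorted_filter => //; rewrite -sorted_map val_enum_ord iota_ltn_sorted.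
by apply: (sorted_ltn_nth tr j0 srt); rewrite ?inE ?size_positions // (ltn_trans ab).
Qed.

Lemma card_ord_lt k (M : 'I_k) : #|[set b : 'I_k | b < M]| = M.
Proof.
have E : (M : nat) = size (take M (enum 'I_k)) by rewrite size_takel // size_enum_ord ltnW.
by rewrite [in RHS]E -count_predT count_take_enum_ord; apply: eq_card => b; rewrite !inE andbT.
Qed.

Lemma card_ord_gt k (M : 'I_k) : #|[set b : 'I_k | M < b]| = k.-1 - M.
Proof.
have E : k.-1 - M = size (drop M.+1 (enum 'I_k)) by rewrite size_drop size_enum_ord; lia.
by rewrite [RHS]E -count_predT count_drop_enum_ord; apply: eq_card => b; rewrite !inE andbT.
Qed.

Section PeakOccurrences.

Variables (k n : nat) (M : 'I_k) (pi : 'S_n).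

Lemma peak_of_occurrence (f : 'I_k -> 'I_n) :
  (forall a b : 'I_k, a < b -> f a < f b) -> (forall b, b != M -> pi (f b) < pi (f M)) ->
  (M <= #|smaller_left pi (f M)|) && (k.-1 - M <= #|smaller_right pi (f M)|).
Proof.
move=> f_incr f_peak.
have f_inj : injective f.
  by move=> a b E; case: (ltngtP a b) => [/f_incr|/f_incr|/val_inj //]; rewrite E ltnn.
rewrite -{1}(card_ord_lt M) -(card_ord_gt M) -!(card_imset _ f_inj).
apply/andP; split; apply/subset_leq_card/subsetP => _ /imsetP[b Hb ->];
  rewrite inE in Hb; rewrite inE f_incr // f_peak //; apply: contraTneq Hb => ->;
  by rewrite ltnn.
Qed.

(* Conversely, a position with enough smaller entries on both sides is the
   peak of an occurrence: take the first M smaller entries to its left and the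
   first k-1-M smaller entries to its right. *)
Lemma occurrence_of_peak (i : 'I_n) :
  M <= #|smaller_left pi i| -> k.-1 - M <= #|smaller_right pi i| ->
  exists f : 'I_k -> 'I_n,
    (forall a b : 'I_k, a < b -> f a < f b) /\ f M = i /\ (forall b, b != M -> pi (f b) < pi i).
Proof.
move=> HL HR.
pose isL := fun j : 'I_n => (j < i) && (pi j < pi i).
pose isR := fun j : 'I_n => (i < j) && (pi j < pi i).
pose L := positions isL; pose R := positions isR.
have inL a : a < M -> isL (nth i L a).
  by move=> aM; apply: (@nth_positions _ isL); apply: leq_trans HL.
have inR (a : 'I_k) : M < a -> isR (nth i R (a - M.+1)).
  by move=> aM; apply: (@nth_positions _ isR); apply: leq_trans HR; have := ltn_ord a; lia.
have incrL a b : a < b -> b < M -> nth i L a < nth i L b.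
  by move=> ab bM; apply: nth_positions_lt (leq_trans bM HL).
have incrR (a b : 'I_k) : M < a -> a < b -> nth i R (a - M.+1) < nth i R (b - M.+1).
  by move=> aM ab; apply: nth_positions_lt; last apply: leq_trans HR; have := ltn_ord b; lia.
exists (fun a => if a < M then nth i L a else if M < a then nth i R (a - M.+1) else i).
split; [|split]; last 2 first.
- by rewrite ltnn.
- move=> b bM; case: (ltngtP b M) => [/inL/andP[] //|/inR/andP[] //|/val_inj E].
  by rewrite E eqxx in bM.
move=> a b ab; case: (ltngtP a M) => aM; case: (ltngtP b M) => bM;
  try (exfalso; lia).
- exact: incrL.
- have [la _] := andP (inL a aM); have [rb _] := andP (inR b bM).
  exact: ltn_trans la rb.
- by case/andP: (inL a aM).
- exact: incrR.
- by case/andP: (inR b bM).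
Qed.

End PeakOccurrences.

Lemma contains_peak_pop k n (M : 'I_k) (p : pop k) (pi : 'S_n) :
  (forall a b, p a b = (a == M) && (b != M)) ->
  pop_contains pi p =
  [exists i, (M <= #|smaller_left pi i|) && (k.-1 - M <= #|smaller_right pi i|)].
Proof.
move=> hp; apply/existsP/existsP => [[f /andP[/forallP f_incr /forallP f_peak]]|[i /andP[HL HR]]].
  exists (f M); apply: peak_of_occurrence => [a b ab|b bM].
    by have /forallP/(_ b)/implyP := f_incr a; apply.
  by have /forallP/(_ b)/implyP := f_peak M; apply; rewrite hp eqxx.
have [f [f_incr [fM f_peak]]] := occurrence_of_peak HL HR.
exists [ffun a => f a]; apply/andP; split; apply/forallP => a; apply/forallP => b;
  apply/implyP; rewrite !ffunE; first exact: f_incr.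
by rewrite hp => /andP[/eqP -> bM]; rewrite fM; apply: f_peak.
Qed.

Lemma max_first_popE k (x : 'S_k) (x1 a b : 'I_k) :
  max_first_pop x x1 a b = (a == x x1) && (b != x x1).
Proof.
rewrite /max_first_pop; congr (_ && _).
apply/existsP/idP => [[j /andP[jx1 /eqP ->]]|bx]; first by rewrite (inj_eq perm_inj).
exists (x^-1 b)%g; rewrite permKV eqxx andbT.
by apply: contra bx => /eqP <-; rewrite permKV.
Qed.

Lemma avoids_max_first_pop k n (x : 'S_k) (x1 : 'I_k) (pi : 'S_n) :
  pop_avoids pi (max_first_pop x x1) = harmless_word (x x1) (k.-1 - x x1) (word pi).
Proof.
rewrite /pop_avoids (contains_peak_pop _ (max_first_popE x x1)) harmless_word_perm.
by rewrite negb_exists; apply: eq_forallb => i; rewrite negb_and -!ltnNge.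
Qed.

Theorem theorem2p2 (k : nat) (hk : 0 < k) (x : 'S_k) (n : nat) :
  #|[set pi : 'S_n | pop_avoids pi (max_first_pop x (Ordinal hk))]| =
  (if n < k then n`! else (k.-1)`! * (k.-1) ^ (n - k + 1)).
Proof.
set M := x (Ordinal hk).
have -> : #|[set pi : 'S_n | pop_avoids pi (max_first_pop x (Ordinal hk))]| =
          count (harmless_word M (k.-1 - M)) (perm_words n).
  by rewrite -card_word; apply: eq_card => pi; rewrite !inE avoids_max_first_pop.
have Mk : M <= k.-1 by rewrite -ltnS prednK.
rewrite count_harmless_perm_words subnKC //.
have -> : (n <= k.-1) = (n < k) by rewrite -ltnS prednK.
by case: ltnP => // kn; congr (_ * _ ^ _); lia.
Qed.
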